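(* Let $A=A_s+A_d\epsilon\in\mathbb{D}^{m\times n}$ and let $A_1=(A_sA_s^+)A(A_s^+A_s)$. Then the DMPGI of $A_1$ exists and $$A^P=A_1^P=A_1^D=A_1^G.$$
   Context: A dual real matrix is $A=A_s+A_d\epsilon$ with real matrices $A_s,A_d$, $\epsilon\neq0$, $\epsilon^2=0$; $A^\top=A_s^\top+A_d^\top\epsilon$. $A_s^+$ is the Moore–Penrose inverse of the real matrix $A_s$. The Moore–Penrose dual generalized inverse (MPDGI) is $A^P=A_s^+-A_s^+A_dA_s^+\epsilon$. The DMPGI $B^D$ of a dual real matrix $B$ is a matrix $X$ with $BXB=B$, $XBX=X$, $(BX)^\top=BX$, $(XB)^\top=XB$. Every dual real matrix has an SVD $B=U\Sigma V^\top$ with $U,V$ orthogonal dual real and $\Sigma$ diagonal with entries $\mu_1\ge\dots\ge\mu_r$ positive appreciable (nonzero standard part), $\mu_{r+1}\ge\dots\ge\mu_t$ positive infinitesimal (zero standard part), and zeros; the essential part is $B_e=U\begin{bmatrix}\mathrm{diag}(\mu_1,\dots,\mu_r)&O\\O&O\end{bmatrix}V^\top$, and the GMPI $B^G$ is the unique $X$ with $BXB=B_e$, $XBX=X$, $(BX)^\top=BX$, $(XB)^\top=XB$. *)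

From HB Require Import structures.
From mathcomp Require Import all_boot all_order all_algebra.
From mathcomp Require Import reals.
From Stdlib Require Import ClassicalEpsilon.
Set Implicit Arguments. Unset Strict Implicit. Unset Printing Implicit Defensive.
Import Order.TTheory GRing.Theory Num.Theory.
Local Open Scope ring_scope.

(* A dual real m x n matrix A = A.1 + A.2 eps. *)
Definition dmat (R : realType) (m n : nat) := ('M[R]_(m, n) * 'M[R]_(m, n))%type.

Section Dual.
Variable R : realType.

Definition is_MP (m n : nat) (A : 'M[R]_(m, n)) (X : 'M[R]_(n, m)) : Prop :=
  [/\ A *m X *m A = A, X *m A *m X = X,
      (A *m X)^T = A *m X & (X *m A)^T = X *m A].

Definition pinv (m n : nat) (A : 'M[R]_(m, n)) : 'M[R]_(n, m) :=
  epsilon (inhabits 0) (fun X => is_MP A X).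

(* dual matrix operations (eps^2 = 0) *)
Definition dmul (m n p : nat) (A : dmat R m n) (B : dmat R n p) : dmat R m p :=
  (A.1 *m B.1, A.1 *m B.2 + A.2 *m B.1).

Definition dtr (m n : nat) (A : dmat R m n) : dmat R n m := (A.1^T, A.2^T).

Definition dident (n : nat) : dmat R n n := (1%:M, 0).

Definition mpdgi (m n : nat) (A : dmat R m n) : dmat R n m :=
  (pinv A.1, - (pinv A.1 *m A.2 *m pinv A.1)).

Definition dA1 (m n : nat) (A : dmat R m n) : dmat R m n :=
  let P := A.1 *m pinv A.1 in let Q := pinv A.1 *m A.1 in
  (P *m A.1 *m Q, P *m A.2 *m Q).

Definition is_DMPGI (m n : nat) (B : dmat R m n) (X : dmat R n m) : Prop :=
  [/\ dmul (dmul B X) B = B, dmul (dmul X B) X = X,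
      dtr (dmul B X) = dmul B X & dtr (dmul X B) = dmul X B].

(* total order on dual numbers a + b eps *)
Definition dle (x y : R * R) : Prop := x.1 < y.1 \/ (x.1 = y.1 /\ x.2 <= y.2).

Definition dorth (n : nat) (U : dmat R n n) : Prop :=
  dmul (dtr U) U = dident n /\ dmul U (dtr U) = dident n.

(* B = U S V^T is an SVD of B with r appreciable singular values and
   t - r positive infinitesimal ones. *)
Definition is_dual_svd (m n : nat) (B : dmat R m n) (U : dmat R m m)
    (S : dmat R m n) (V : dmat R n n) (r t : nat) : Prop :=
  dorth U /\ dorth V /\
  (forall (i : 'I_m) (j : 'I_n), (i : nat) <> j -> S.1 i j = 0 /\ S.2 i j = 0) /\
  (r <= t /\ t <= minn m n)%N /\
  (forall (i : 'I_m) (j : 'I_n), (i : nat) = j ->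
      [/\ ((i < r)%N -> 0 < S.1 i j),
          ((r <= i)%N -> (i < t)%N -> S.1 i j = 0 /\ 0 < S.2 i j)
        & ((t <= i)%N -> S.1 i j = 0 /\ S.2 i j = 0)]) /\
  (forall (i i' : 'I_m) (j j' : 'I_n), (i : nat) = j -> (i' : nat) = j' ->
      (i <= i')%N -> (i' < t)%N -> dle (S.1 i' j', S.2 i' j') (S.1 i j, S.2 i j)) /\
  B = dmul (dmul U S) (dtr V).

Definition dtrunc (m n : nat) (S : dmat R m n) (r : nat) : dmat R m n :=
  (\matrix_(i, j) (if (i < r)%N then S.1 i j else 0),
   \matrix_(i, j) (if (i < r)%N then S.2 i j else 0)).

Definition is_essential_part (m n : nat) (B E : dmat R m n) : Prop :=
  exists U S V r t, is_dual_svd B U S V r t /\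
    E = dmul (dmul U (dtrunc S r)) (dtr V).

Definition is_GMPI_wrt (m n : nat) (B E : dmat R m n) (X : dmat R n m) : Prop :=
  [/\ dmul (dmul B X) B = E, dmul (dmul X B) X = X,
      dtr (dmul B X) = dmul B X & dtr (dmul X B) = dmul X B].

End Dual.

From HB Require Import structures.
From mathcomp Require Import all_boot all_order all_algebra.
From mathcomp Require Import reals.
From Stdlib Require Import ClassicalEpsilon.
Import Order.TTheory GRing.Theory Num.Theory.
Set Implicit Arguments. Unset Strict Implicit.
Local Open Scope ring_scope.

(* Write S = A_s, S^+ = pinv S, P = S S^+ and Q = S^+ S.
   The matrix A_1 has standard part S and dual part D_1 = P A_d Q, which
   satisfies P D_1 = D_1 = D_1 Q: its dual part lies in the column and row
   spaces of its standard part.  For every dual matrix B = S + D eps with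
   this property we show:
   - its MPDGI B^P = S^+ - S^+ D S^+ eps satisfies the four Penrose
     equations, i.e. it is a DMPGI of B; DMPGIs are unique in general;
   - B has no positive infinitesimal singular values (the dual part of a
     diagonal entry of an infinitesimal singular value would be an entry
     of U_s^T D V_s = Sigma_s V_s^T S^+ D V_s, whose row is zero), so its
     essential part is B itself and the GMPI equations are the Penrose ones.
   The theorem follows since A_1^P = A^P (because Q S^+ P = S^+). *)

Section MoorePenrose.
Variable R : realType.

Lemma row_self_orth0 (n : nat) (w : 'rV[R]_n) : w *m w^T = 0 -> w = 0.
Proof.
move=> /matrixP /(_ 0 0); rewrite !mxE => hw.
have : \sum_j w 0 j * w 0 j == 0.
  by apply/eqP; rewrite -[RHS]hw; apply: eq_bigr => j _; rewrite mxE.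
rewrite psumr_eq0; last by move=> j _; rewrite -expr2 sqr_ge0.
move=> /allP hall; apply/matrixP => i j; rewrite (ord1 i) mxE.
by have := hall j (mem_index_enum _); rewrite /= mulf_eq0 orbb => /eqP ->.
Qed.

Lemma gram_unitmx (k n : nat) (G : 'M[R]_(k, n)) :
  row_free G -> G *m G^T \in unitmx.
Proof.
move=> freeG; rewrite -row_free_unit; apply: inj_row_free => v hv.
have : (v *m G) *m (v *m G)^T = 0.
  by rewrite trmx_mul mulmxA -(mulmxA v) hv mul0mx.
by move/row_self_orth0/eqP; rewrite mulmx_free_eq0 // => /eqP.
Qed.

(* For a full-rank factorisation F G, the matrix
   G^T (G G^T)^-1 (F^T F)^-1 F^T is a Moore-Penrose inverse of F G. *)
Lemma is_MP_full_rank_factor (m r n : nat) (F : 'M[R]_(m, r)) (G : 'M[R]_(r, n)) :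
  row_free G -> row_free F^T -> exists X, is_MP (F *m G) X.
Proof.
move=> freeG freeFt.
set N := G *m G^T; set M := F^T *m F.
have uN : N \in unitmx by exact: gram_unitmx.
have uM : M \in unitmx by have := gram_unitmx freeFt; rewrite trmxK.
have symM : M^T = M by rewrite /M trmx_mul trmxK.
have symN : N^T = N by rewrite /N trmx_mul trmxK.
exists (G^T *m invmx N *m invmx M *m F^T).
have projL : F *m G *m (G^T *m invmx N *m invmx M *m F^T) = F *m invmx M *m F^T.
  by rewrite !mulmxA -(mulmxA F G) -/N -(mulmxA F N) mulmxV // mulmx1.
have projR : G^T *m invmx N *m invmx M *m F^T *m (F *m G) = G^T *m invmx N *m G.
  by rewrite !mulmxA -(mulmxA _ F^T F) -/M -(mulmxA _ (invmx M) M) mulVmx // mulmx1.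
split.
- by rewrite projL !mulmxA -(mulmxA _ F^T F) -/M -(mulmxA _ _ M) mulVmx // mulmx1.
- by rewrite projR !mulmxA -(mulmxA _ G G^T) -/N -(mulmxA _ (invmx N) N) mulVmx // mulmx1.
- by rewrite projL !trmx_mul trmxK trmx_inv symM mulmxA.
- by rewrite projR !trmx_mul trmxK trmx_inv symN mulmxA.
Qed.

(* pinv S satisfies the Penrose equations (via S = col_base S *m row_base S). *)
Lemma pinvP (m n : nat) (S : 'M[R]_(m, n)) : is_MP S (pinv S).
Proof.
have [X hX] : exists X, is_MP S X.
  rewrite -(mulmx_base S); apply: is_MP_full_rank_factor.
    exact: row_base_free.
  by rewrite /row_free mxrank_tr; exact: col_base_full.
exact: (epsilon_spec (inhabits 0) (fun X => is_MP S X) (ex_intro _ X hX)).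
Qed.

Lemma pinv_mulK (m n : nat) (S : 'M[R]_(m, n)) : S *m pinv S *m S = S.
Proof. by case: (pinvP S). Qed.

Lemma mul_pinvK (m n : nat) (S : 'M[R]_(m, n)) : pinv S *m S *m pinv S = pinv S.
Proof. by case: (pinvP S). Qed.

End MoorePenrose.

Section DualAlgebra.
Variable R : realType.

Lemma dmulA (m n p q : nat) (X : dmat R m n) (Y : dmat R n p) (Z : dmat R p q) :
  dmul X (dmul Y Z) = dmul (dmul X Y) Z.
Proof.
case: X => [X1 X2]; case: Y => [Y1 Y2]; case: Z => [Z1 Z2]; rewrite /dmul /=.
by rewrite !mulmxA mulmxDr mulmxDl !mulmxA addrA.
Qed.

Lemma dtr_mul (m n p : nat) (X : dmat R m n) (Y : dmat R n p) :
  dtr (dmul X Y) = dmul (dtr Y) (dtr X).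
Proof.
case: X => [X1 X2]; case: Y => [Y1 Y2]; rewrite /dmul /dtr /=.
by rewrite linearD /= !trmx_mul addrC.
Qed.

(* The DMPGI of a dual matrix, when it exists, is unique (the classical
   Penrose argument, valid over any ring with an involution). *)
Lemma DMPGI_uniq (m n : nat) (B : dmat R m n) (X Y : dmat R n m) :
  is_DMPGI B X -> is_DMPGI B Y -> X = Y.
Proof.
case=> hBXB hXBX hBX hXB [kBYB kYBY kBY kYB].
have X_eq : dmul (dmul X (dtr X)) (dtr B) = X.
  by rewrite -dmulA -dtr_mul hBX dmulA hXBX.
have Bt_right : dtr B = dmul (dtr B) (dmul B Y) by rewrite -kBY -dtr_mul kBYB.
have X_BY : X = dmul X (dmul B Y) by rewrite -{1}X_eq {1}Bt_right !dmulA X_eq.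
have Y_eq : dmul (dtr B) (dmul (dtr Y) Y) = Y by rewrite dmulA -dtr_mul kYB kYBY.
have Bt_left : dtr B = dmul (dmul X B) (dtr B) by rewrite -hXB -dtr_mul dmulA hBXB.
by rewrite -Y_eq {1}Bt_left -!dmulA Y_eq -X_BY.
Qed.

End DualAlgebra.

(* Dual matrices whose dual part lies in the column space and in the row
   space of the standard part: P B_d = B_d = B_d Q. *)
Section RangeCompatible.
Variables (R : realType) (m n : nat) (B : dmat R m n).
Hypothesis col_range : B.1 *m pinv B.1 *m B.2 = B.2.
Hypothesis row_range : B.2 *m pinv B.1 *m B.1 = B.2.

Lemma mpdgi_is_DMPGI : is_DMPGI B (mpdgi B).
Proof.
case: B col_range row_range => S D /= hPD hDQ.
have [hSXS hXSX hSX hXS] := pinvP S.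
have BX : dmul (S, D) (mpdgi (S, D)) = (S *m pinv S, 0).
  by rewrite /dmul /= mulmxN !mulmxA hPD addNr.
have XB : dmul (mpdgi (S, D)) (S, D) = (pinv S *m S, 0).
  by rewrite /dmul /= mulNmx -!mulmxA (mulmxA D) hDQ addrN.
split; rewrite ?dmulA ?BX ?XB /dmul /dtr /= ?trmx0 ?hSX ?hXS //;
  congr pair; rewrite ?mul0mx ?addr0 ?hSXS ?hPD //.
by rewrite mulmxN !mulmxA mul_pinvK.
Qed.

Section SVD.
Variables (U : dmat R m m) (Sg : dmat R m n) (V : dmat R n n) (r t : nat).
Hypothesis svd : is_dual_svd B U Sg V r t.

(* B has no positive infinitesimal singular values: the dual part of such a
   diagonal entry of Sigma would equal an entry of U_s^T B_d V_s, while
   U_s^T B_d V_s = Sigma_s V_s^T (pinv B_s) B_d V_s vanishes on that row. *)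
Lemma svd_no_infinitesimal : (t <= r)%N.
Proof.
case: svd => [[/(congr1 fst) /= hU _] [[/(congr1 fst) /= hV _]]].
move=> [offdiag [[_ htmn] [diag [_ hB]]]].
have hB1 : B.1 = U.1 *m Sg.1 *m V.1^T by move: hB => /(congr1 fst).
have hB2 : B.2 = U.1 *m Sg.1 *m V.2^T + (U.1 *m Sg.2 + U.2 *m Sg.1) *m V.1^T.
  by move: hB => /(congr1 snd).
rewrite leqNgt; apply/negP => hrt.
have hm : (r < m)%N by apply: leq_trans hrt (leq_trans htmn (geq_minl m n)).
have hn : (r < n)%N by apply: leq_trans hrt (leq_trans htmn (geq_minr m n)).
pose i : 'I_m := Ordinal hm; pose j : 'I_n := Ordinal hn.
have [_ /(_ (leqnn r) hrt) [Sg1_ij0 Sg2_pos] _] := diag i j erefl.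
have row_i0 l : Sg.1 i l = 0.
  have [hl | hl] := eqVneq (l : nat) r.
    by have -> : l = j by apply: val_inj.
  by have [] // := offdiag i l; move=> /= hil; rewrite -hil eqxx in hl.
have col_j0 l : Sg.1 l j = 0.
  have [hl | hl] := eqVneq (l : nat) r.
    by have -> : l = i by apply: val_inj.
  by have [] // := offdiag l j; move=> /= hlj; rewrite hlj eqxx in hl.
have entry_zero : (U.1^T *m B.2 *m V.1) i j = 0.
  rewrite -col_range {1}hB1 !mulmxA hU mul1mx -!mulmxA mxE big1 // => l _.
  by rewrite row_i0 mul0r.
have entry_Sg2 : (U.1^T *m B.2 *m V.1) i j = Sg.2 i j.
  rewrite hB2 (mulmxDr U.1^T) mulmxDl !mulmxA hU !mul1mx.
  rewrite -!mulmxA hV mulmx1 mulmxDr !mulmxA hU mul1mx -(mulmxA Sg.1).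
  rewrite mxE [X in X + _]mxE big1 ?add0r => [|l _]; last by rewrite row_i0 mul0r.
  rewrite mxE [X in _ + X]mxE big1 ?addr0 // => l _.
  by rewrite col_j0 mulr0.
by move: Sg2_pos; rewrite -entry_Sg2 entry_zero ltxx.
Qed.

Lemma svd_dtrunc_id : dtrunc Sg r = Sg.
Proof.
have htr := svd_no_infinitesimal.
case: svd => _ [_ [offdiag [_ [diag _]]]].
case: Sg offdiag diag => S1 S2 /= offdiag diag.
rewrite /dtrunc /=; congr pair; apply/matrixP => i j; rewrite mxE;
  case: ifP => // /negbT; rewrite -leqNgt => hri;
  have [hij | hij] := eqVneq (i : nat) j;
  by [ case: (diag i j hij) => _ _ /(_ (leq_trans htr hri)) []
     | case: (offdiag i j (elimN eqP hij)) ].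
Qed.

End SVD.

Lemma essential_part_id (E : dmat R m n) : is_essential_part B E -> E = B.
Proof.
case=> U [Sg [V [r [t [svd ->]]]]].
by rewrite (svd_dtrunc_id svd); case: svd => _ [_ [_ [_ [_ [_ <-]]]]].
Qed.

End RangeCompatible.

Section A1.
Variables (R : realType) (m n : nat) (A : dmat R m n).

Lemma dA1_std : (dA1 A).1 = A.1.
Proof. by rewrite /= !mulmxA !pinv_mulK. Qed.

Lemma dA1_col_range :
  (dA1 A).1 *m pinv (dA1 A).1 *m (dA1 A).2 = (dA1 A).2.
Proof. by rewrite dA1_std /= !mulmxA pinv_mulK. Qed.

Lemma dA1_row_range :
  (dA1 A).2 *m pinv (dA1 A).1 *m (dA1 A).1 = (dA1 A).2.
Proof. by rewrite dA1_std /= -!mulmxA [A.1 *m (_ *m A.1)]mulmxA pinv_mulK. Qed.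

(* A_1^P = A^P, since Q S^+ P = S^+. *)
Lemma mpdgi_dA1 : mpdgi (dA1 A) = mpdgi A.
Proof.
rewrite /mpdgi dA1_std /=; congr (_, - _).
rewrite !mulmxA mul_pinvK -!mulmxA.
by rewrite [pinv A.1 *m (A.1 *m _)]mulmxA mul_pinvK.
Qed.

End A1.

Theorem theorem5p3 (R : realType) (m n : nat) (A : dmat R m n) :
  [/\ (* the DMPGI of A_1 exists, is unique, and equals A^P *)
      is_DMPGI (dA1 A) (mpdgi A),
      (forall X : dmat R n m, is_DMPGI (dA1 A) X -> X = mpdgi A),
      (* A_1^P = A^P *)
      mpdgi (dA1 A) = mpdgi A,
      (* A^P is a GMPI of A_1 *)
      (forall E : dmat R m n, is_essential_part (dA1 A) E ->
          is_GMPI_wrt (dA1 A) E (mpdgi A))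
    & (* and the GMPI of A_1 is unique, hence A_1^G = A^P *)
      (forall (E : dmat R m n) (X : dmat R n m), is_essential_part (dA1 A) E ->
          is_GMPI_wrt (dA1 A) E X -> X = mpdgi A)].
Proof.
have hDM : is_DMPGI (dA1 A) (mpdgi A).
  by rewrite -mpdgi_dA1; apply: mpdgi_is_DMPGI;
    [exact: dA1_col_range | exact: dA1_row_range].
have ess E : is_essential_part (dA1 A) E -> E = dA1 A.
  by apply: essential_part_id; exact: dA1_col_range.
split.
- exact: hDM.
- by move=> X hX; exact: DMPGI_uniq hX hDM.
- exact: mpdgi_dA1.
- by move=> E /ess ->; exact: hDM.
- by move=> E X /ess -> hX; exact: DMPGI_uniq hX hDM.
Qed.
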